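(* There exist absolute constants $c,C>0$ such that the following holds. Let $G=(V,E)$ be a finite connected triangle-free non-bipartite graph satisfying $CD(0,\infty)$. Then the eigenvalues $0=\lambda_1<\lambda_2\le\cdots\le\lambda_{|V|}$ of the Laplacian $\Delta$ satisfy \[ \frac{c}{dD^2}\leq \lambda_2\leq \cdots\leq \lambda_{|V|}\leq 2-\frac{C}{dD^2}, \] where $d$ is the maximal vertex degree and $D$ the diameter of $G$.
   Context: $G$ is a finite simple connected graph with degrees $d_x$. The Laplacian is $\Delta f(x)=\frac{1}{d_x}\sum_{y\sim x}(f(y)-f(x))$, with eigenvalues defined by $-\Delta f=\lambda f$, $f\ne0$. $\Gamma(f,g)=\frac12\{\Delta(fg)-g\Delta f-f\Delta g\}$, $\Gamma_2(f,g)=\frac12\{\Delta\Gamma(f,g)-\Gamma(g,\Delta f)-\Gamma(f,\Delta g)\}$. $G$ satisfies $CD(0,\infty)$ if $\Gamma_2(f,f)(x)\ge 0$ for all $f:V\to\mathbb{R}$ and all $x\in V$. *)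

From mathcomp Require Import all_boot all_order all_algebra.
From mathcomp Require Import Rstruct.
Set Implicit Arguments. Unset Strict Implicit. Unset Printing Implicit Defensive.
Import Order.TTheory GRing.Theory Num.Theory.
Local Open Scope ring_scope.

Notation R := Rdefinitions.R.

Section Graph.
Variables (T : finType) (e : rel T).

Definition simple_graph : Prop := symmetric e /\ irreflexive e.

Definition connected_graph : Prop := forall x y : T, connect e x y.

Definition triangle_free : Prop := forall x y z : T, ~ [/\ e x y, e y z & e x z].

Definition bipartite : Prop :=
  exists col : T -> bool, forall x y, e x y -> col x != col y.

Definition deg (x : T) : nat := #|[set y | e x y]|.

Definition max_deg : nat := \max_(x : T) deg x.

Definition walkn (n : nat) (x y : T) : bool :=
  [exists p : n.-tuple T, path e x p && (last x p == y)].

(* graph distance: least n with a walk of length n from x to y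
   (default #|T| if none, which never happens in a connected graph) *)
Definition gdist (x y : T) : nat :=
  \big[minn/#|T|]_(n < #|T| | walkn n x y) (n : nat).

Definition diameter : nat := \max_(x : T) \max_(y : T) gdist x y.

Definition lap (f : T -> R) : T -> R :=
  fun x => (deg x)%:R^-1 * \sum_(y | e x y) (f y - f x).

Definition Gam (f g : T -> R) : T -> R :=
  fun x => 2^-1 * (lap (fun z => f z * g z) x - g x * lap f x - f x * lap g x).

Definition Gam2 (f g : T -> R) : T -> R :=
  fun x => 2^-1 * (lap (Gam f g) x - Gam g (lap f) x - Gam f (lap g) x).

Definition CD0inf : Prop := forall (f : T -> R) (x : T), 0 <= Gam2 f f x.

Definition eigenpair (lambda : R) (f : T -> R) : Prop :=
  (exists x, f x != 0) /\ forall x, - lap f x = lambda * f x.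

End Graph.

From mathcomp Require Import all_boot all_order all_algebra.
From mathcomp Require Import Rstruct.
From mathcomp Require Import ring lra.
Import Order.TTheory GRing.Theory Num.Theory.
Local Open Scope ring_scope.
Set Implicit Arguments. Unset Strict Implicit. Unset Printing Implicit Defensive.

(* Put s = 1, nu = lambda or s = -1, nu = 2 - lambda.  The eigen-equation then
   reads Delta_s f = - s nu f, where Delta_s f(x) is the average over y ~ x of
   f y - s f x, and both bounds become nu >= 1/(18 d D^2).  Let Gamma_s f(x) be
   half the average of (f y - s f x)^2.  Applying CD(0,oo) at x to the function
   equal to s f on the neighbours of x and to f elsewhere (triangle-freeness
   keeps the second neighbours of x untouched) gives the Bochner inequality
   1/2 Delta Gamma_s f + nu Gamma_s f >= 0, and the maximum principle for
   Gamma_s f + 2 nu f^2 turns it into Gamma_s f <= 4 nu max f^2.  Conversely,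
   if uv is an edge maximising m = |f v - s f u|, then Gamma_s f(u) >= m^2/(2d),
   while walking along shortest paths (closed into an odd walk through uv when
   s = -1, G being non-bipartite) gives 2 max |f| <= 3 D m.  If nu = 0 then
   f v = s f u on every edge: f is constant when s = 1, and the sign of f
   2-colours G when s = -1. *)

Lemma exists_argmax (T : finType) (h : T -> R) (t : T) :
  exists x, forall y, h y <= h x.
Proof. by case: (arg_maxP h (isT : xpredT t)) => x _ hx; exists x => y; apply: hx. Qed.

Lemma exists_argmin (T : finType) (h : T -> R) (t : T) :
  exists x, forall y, h x <= h y.
Proof. by case: (arg_minP h (isT : xpredT t)) => x _ hx; exists x => y; apply: hx. Qed.

Lemma exists_argmax_sqr (T : finType) (h : T -> R) (t : T) : h t != 0 ->
  exists2 x, forall y, h y ^+ 2 <= h x ^+ 2 & h x != 0.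
Proof.
move=> ht; have [x hmax] := exists_argmax (fun y => h y ^+ 2) t.
exists x => //; apply: contraNneq ht => hx0.
by rewrite -sqrf_eq0 eq_le sqr_ge0 andbT; have := hmax t; rewrite hx0 expr0n.
Qed.

Section Graph.
Variables (T : finType) (e : rel T).

Lemma deg_gt0 x y : e x y -> (0 < deg e x)%N.
Proof. by move=> exy; apply/card_gt0P; exists y; rewrite inE. Qed.

Lemma connected_deg_gt0 u v : connected_graph e -> e u v -> forall x, (0 < deg e x)%N.
Proof.
move=> conn euv x; have /connectP [[|y p] /= pth lst] := conn x u.
  by rewrite -lst; apply: deg_gt0 euv.
by case/andP: pth => /deg_gt0.
Qed.

Lemma deg_le_max_deg x : (deg e x <= max_deg e)%N.
Proof. exact: (leq_bigmax x). Qed.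

Lemma sumr_nbr_const x (c : R) : \sum_(y | e x y) c = c * (deg e x)%:R.
Proof.
by rewrite /deg -sum1dep_card natr_sum big_distrr; apply: eq_bigr => y _; rewrite /= mulr1.
Qed.

Lemma exists_edge_of_not_bipartite : ~ bipartite e -> exists u v, e u v.
Proof.
move=> nbip; case: (boolP [exists u, exists v, e u v]).
  by case/existsP => u /existsP [v euv]; exists u, v.
move/existsPn => noedge; case: nbip; exists (fun _ => true) => x y exy.
by have /existsPn /(_ y) := noedge x; rewrite exy.
Qed.

Lemma exists_max_edge (F : T -> T -> R) u v : e u v ->
  exists u' v', e u' v' /\ forall a b, e a b -> F a b <= F u' v'.
Proof.
move=> euv; have := arg_maxP (fun p : T * T => F p.1 p.2) (euv : (fun p => e p.1 p.2) (u, v)).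
by case=> [[u' v'] euv' max]; exists u', v'; split => // a b eab; apply: (max (a, b)).
Qed.

Lemma Gam_sum f g x : Gam e f g x =
  2^-1 * ((deg e x)%:R^-1 * \sum_(y | e x y) (f y - f x) * (g y - g x)).
Proof.
rewrite /Gam /lap; congr (_ * _).
rewrite (mulrCA (g x)) (mulrCA (f x)) -!mulrBr; congr (_ * _).
by rewrite !big_distrr -!sumrB; apply: eq_bigr => y _ /=; ring.
Qed.

Lemma lap_linear (a b : T -> R) (c : R) x :
  lap e (fun z => a z + c * b z) x = lap e a x + c * lap e b x.
Proof.
rewrite /lap mulrCA -mulrDr; congr (_ * _).
by rewrite big_distrr -big_split; apply: eq_bigr => y _ /=; ring.
Qed.

Lemma lap_eq_nbr (h1 h2 : T -> R) x :
  h1 x = h2 x -> (forall y, e x y -> h1 y = h2 y) -> lap e h1 x = lap e h2 x.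
Proof.
by move=> hx hy; rewrite /lap; congr (_ * _); apply: eq_bigr => y /hy ->; rewrite hx.
Qed.

Lemma lap_argmax_le0 (h : T -> R) x : (forall y, h y <= h x) -> lap e h x <= 0.
Proof.
move=> hmax; rewrite mulr_ge0_le0 ?invr_ge0 ?ler0n //.
by rewrite sumr_le0 // => y _; rewrite subr_le0.
Qed.

Lemma lap_argmin_ge0 (h : T -> R) x : (forall y, h x <= h y) -> 0 <= lap e h x.
Proof.
move=> hmin; rewrite mulr_ge0 ?invr_ge0 ?ler0n //.
by rewrite sumr_ge0 // => y _; rewrite subr_ge0.
Qed.

Lemma lap_argmax_ge0_nbr (h : T -> R) x y :
  (forall z, h z <= h x) -> 0 <= lap e h x -> e x y -> h y = h x.
Proof.
move=> hmax lap_ge0 exy.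
have gaps_ge0 z : e x z -> 0 <= h x - h z by rewrite subr_ge0.
suff /(psumr_eq0P gaps_ge0)/(_ y exy)/eqP : \sum_(z | e x z) (h x - h z) = 0.
  by rewrite subr_eq0 => /eqP.
apply/eqP; rewrite eq_le sumr_ge0 // andbT.
move: lap_ge0; rewrite /lap pmulr_rge0 ?invr_gt0 ?ltr0n ?(deg_gt0 exy) //.
by rewrite -oppr_le0 -sumrN; under eq_bigr do rewrite opprB.
Qed.

Lemma connected_closed (a : {pred T}) x y :
  connected_graph e -> closed e a -> x \in a -> y \in a.
Proof. by move=> conn cl; rewrite (closed_connect cl (conn x y)). Qed.

Lemma connected_edge_invariant (h : T -> R) : connected_graph e ->
  (forall x y, e x y -> h x = h y) -> forall x y, h x = h y.
Proof.
move=> conn inv x y; apply/eqP; rewrite eq_sym.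
apply: (@connected_closed [pred z | h z == h x] x) => //; last by rewrite inE.
by move=> a b /inv; rewrite !inE => ->.
Qed.

Lemma lap_ge0_const (h : T -> R) : symmetric e -> connected_graph e ->
  (forall x, 0 <= lap e h x) -> forall x y, h x = h y.
Proof.
move=> sym conn lap_ge0 x y; have [x0 hmax] := exists_argmax h x.
have at_max z : h z = h x0.
  apply/eqP; apply: (@connected_closed [pred z | h z == h x0] x0) => //; last by rewrite inE.
  have max_nbr a b : e a b -> h a = h x0 -> h b = h x0.
    by move=> eab ha; rewrite (lap_argmax_ge0_nbr _ (lap_ge0 a) eab) // => c; rewrite ha.
  move=> a b eab; rewrite !inE; apply/eqP/eqP; first exact: max_nbr.
  by apply: max_nbr; rewrite sym.
by rewrite !at_max.
Qed.

Lemma gdist_path x y : connect e x y ->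
  exists p, [/\ path e x p, last x p = y & size p = gdist e x y].
Proof.
move=> /connectP [p0 /shortenP [p pth uniq_p _] ->] {p0}.
have size_p : (size p < #|T|)%N.
  by have := max_card (mem (x :: p)); rewrite (card_uniqP uniq_p).
have walk_p : walkn e (Ordinal size_p) x (last x p).
  by apply/existsP; exists (in_tuple p); rewrite pth eqxx.
rewrite /gdist -minEnat.
have [i walk_i ->] := @eq_bigmin _ nat _ #|T| _ (fun n : 'I_#|T| => walkn e n x (last x p))
  (fun n => n : nat) walk_p (fun i _ => ltnW (ltn_ord i)).
case/existsP: walk_i => q /andP [qpath /eqP qlast].
by exists q; rewrite size_tuple.
Qed.

Lemma gdist_le_diameter x y : (gdist e x y <= diameter e)%N.
Proof.
apply: (leq_trans (leq_bigmax y)).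
exact: (leq_bigmax (F := fun x => \max_y gdist e x y) x).
Qed.

Lemma diameter_gt0 u v : connected_graph e -> irreflexive e -> e u v ->
  (0 < diameter e)%N.
Proof.
move=> conn irr euv; have [p [_ p_last p_size]] := gdist_path (conn u v).
apply: leq_trans (gdist_le_diameter u v); rewrite -p_size lt0n size_eq0.
by apply: contraTneq euv => p0; rewrite p0 /= in p_last; rewrite p_last irr.
Qed.

Lemma path_variation (f : T -> R) (s m : R) : s ^+ 2 = 1 ->
  (forall u v, e u v -> `|f v - s * f u| <= m) ->
  forall x p, path e x p -> `|f (last x p) - s ^+ size p * f x| <= (size p)%:R * m.
Proof.
move=> s2 edge_m x p; have /eqP s_norm : `|s| == 1 by rewrite -sqr_norm_eq1 s2.
elim: p x => [|y p IHp] x /=; first by rewrite mul1r subrr normr0 mul0r.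
case/andP => exy pth.
have -> : f (last y p) - s ^+ (size p).+1 * f x =
    (f (last y p) - s ^+ size p * f y) + s ^+ size p * (f y - s * f x).
  by rewrite exprSr; ring.
rewrite (le_trans (ler_normD _ _)) // normrM normrX s_norm expr1n mul1r.
by rewrite -addn1 natrD mulrDl mul1r lerD ?IHp ?edge_m.
Qed.

Definition lap_tw (s : R) (f : T -> R) (x : T) : R :=
  (deg e x)%:R^-1 * \sum_(y | e x y) (f y - s * f x).

Definition Gam_tw (s : R) (f : T -> R) (x : T) : R :=
  2^-1 * ((deg e x)%:R^-1 * \sum_(y | e x y) (f y - s * f x) ^+ 2).

Lemma lap_tw1 f x : lap_tw 1 f x = lap e f x.
Proof. by rewrite /lap_tw; under eq_bigr do rewrite mul1r. Qed.

Lemma lap_twN1 f x : (0 < deg e x)%N -> lap_tw (-1) f x = lap e f x + 2 * f x.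
Proof.
move=> deg_x; rewrite /lap_tw (eq_bigr (fun y => (f y - f x) + 2 * f x)); last first.
  by move=> y _; ring.
rewrite big_split /= sumr_nbr_const mulrDr mulrCA mulVf ?mulr1 //.
by rewrite pnatr_eq0 -lt0n.
Qed.

Lemma Gam_tw_ge0 s f x : 0 <= Gam_tw s f x.
Proof. by rewrite !mulr_ge0 ?invr_ge0 ?ler0n ?sumr_ge0 // => y _; apply: sqr_ge0. Qed.

Lemma Gam_tw_ge_edge s f u v (d : nat) : e u v -> (deg e u <= d)%N ->
  2^-1 * (d%:R^-1 * (f v - s * f u) ^+ 2) <= Gam_tw s f u.
Proof.
move=> euv deg_u; have deg_u_gt0 := deg_gt0 euv.
rewrite /Gam_tw ler_pM2l ?invr_gt0 ?ltr0n //.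
apply: (@le_trans _ _ ((deg e u)%:R^-1 * (f v - s * f u) ^+ 2)).
  rewrite ler_wpM2r ?sqr_ge0 // lef_pV2 ?posrE ?ltr0n ?ler_nat //.
  exact: leq_trans deg_u.
rewrite ler_wpM2l ?invr_ge0 ?ler0n // (bigD1 v) //= lerDl.
by rewrite sumr_ge0 // => y _; apply: sqr_ge0.
Qed.

Lemma Gam_tw_eq0 s f x y : Gam_tw s f x = 0 -> e x y -> f y = s * f x.
Proof.
move=> /eqP + exy.
rewrite /Gam_tw !mulf_eq0 !invr_eq0 !pnatr_eq0 /= eqn0Ngt (deg_gt0 exy) /=.
have terms_ge0 z : e x z -> 0 <= (f z - s * f x) ^+ 2 by move=> _; apply: sqr_ge0.
move=> /eqP /(psumr_eq0P terms_ge0) /(_ y exy) /eqP.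
by rewrite sqrf_eq0 subr_eq0 => /eqP.
Qed.

Lemma gdist_variation (f : T -> R) (s m : R) : connected_graph e -> s ^+ 2 = 1 ->
  0 <= m -> (forall u v, e u v -> `|f v - s * f u| <= m) ->
  forall x y, `|f y - s ^+ gdist e x y * f x| <= (diameter e)%:R * m.
Proof.
move=> conn s2 m_ge0 edge_m x y.
have [p [pth p_last p_size]] := gdist_path (conn x y).
rewrite -p_size -{1}p_last; apply: le_trans (path_variation s2 edge_m pth) _.
by rewrite ler_wpM2r // ler_nat p_size gdist_le_diameter.
Qed.

Lemma eigenfun_norm_le (lam m : R) (f : T -> R) :
  connected_graph e -> 0 < lam -> 0 <= m ->
  (forall x, lap e f x = - (lam * f x)) ->
  (forall u v, e u v -> `|f v - f u| <= m) ->
  forall x, `|f x| <= (diameter e)%:R * m.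
Proof.
move=> conn lam_gt0 m_ge0 f_eigen edge_m x.
have [xmax fmax] := exists_argmax f x; have [xmin fmin] := exists_argmin f x.
have fmax_ge0 : 0 <= f xmax.
  by have := lap_argmax_le0 fmax; rewrite f_eigen oppr_le0 pmulr_rge0.
have fmin_le0 : f xmin <= 0.
  by have := lap_argmin_ge0 fmin; rewrite f_eigen oppr_ge0 pmulr_rle0.
have edge_m1 u v : e u v -> `|f v - 1 * f u| <= m by rewrite mul1r; apply: edge_m.
have := gdist_variation conn (expr1n _ 2) m_ge0 edge_m1 xmin xmax.
rewrite expr1n mul1r => /(le_trans (ler_norm _)) osc_le.
have fmin_x := fmin x; have fmax_x := fmax x.
by rewrite ler_norml; apply/andP; split; lra.
Qed.

Lemma not_bipartite_parity_edge x : ~ bipartite e ->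
  exists u v, e u v /\ odd (gdist e x u) = odd (gdist e x v).
Proof.
move=> nbip.
case: (boolP [exists u, exists v, e u v && (odd (gdist e x u) == odd (gdist e x v))]).
  by case/existsP => u /existsP [v /andP [euv /eqP same]]; exists u, v.
move/existsPn => no_edge; case: nbip; exists (fun y => odd (gdist e x y)) => u v euv.
by have /existsPn /(_ v) := no_edge u; rewrite euv.
Qed.

(* The edge uv closes the shortest paths from x to u and to v into an odd
   walk of length at most 2D + 1. *)
Lemma signless_norm_le (m : R) (f : T -> R) :
  connected_graph e -> irreflexive e -> ~ bipartite e ->
  (forall u v, e u v -> `|f v + f u| <= m) ->
  forall x, 2 * `|f x| <= 3 * (diameter e)%:R * m.
Proof.
move=> conn irr nbip edge_m x.
have [u [v [euv parity_uv]]] := not_bipartite_parity_edge x nbip.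
have m_ge0 : 0 <= m := le_trans (normr_ge0 _) (edge_m u v euv).
have D_ge1 : 1 <= (diameter e)%:R :> R by rewrite ler1n (diameter_gt0 conn irr euv).
have edge_mN1 a b : e a b -> `|f b - (-1) * f a| <= m.
  by rewrite mulN1r opprK; apply: edge_m.
have sqrN1 : (-1 : R) ^+ 2 = 1 by rewrite sqrrN expr1n.
have var := gdist_variation conn sqrN1 m_ge0 edge_mN1 x.
have var_u := var u; have := var v.
rewrite -signr_odd -parity_uv signr_odd => var_v.
move: var_u var_v; set sg := (-1) ^+ gdist e x u => var_u var_v.
have -> : 2 * `|f x| = `|(f v + f u) - (f u - sg * f x) - (f v - sg * f x)|.
  have -> : (f v + f u) - (f u - sg * f x) - (f v - sg * f x) = 2 * sg * f x by ring.
  by rewrite !normrM normrX normrN1 expr1n mulr1 ger0_norm.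
apply: le_trans (ler_normB _ _) _; apply: le_trans (lerD (ler_normB _ _) (lexx _)) _.
have := edge_m u v euv; nra.
Qed.

Lemma alternating_bipartite (f : T -> R) x0 : connected_graph e -> f x0 != 0 ->
  (forall x y, e x y -> f y = - f x) -> bipartite e.
Proof.
move=> conn fx0_neq0 alt; exists (fun x => 0 < f x) => x y exy.
have sqr_inv a b : e a b -> f a ^+ 2 = f b ^+ 2 by move=> /alt ->; rewrite sqrrN.
have fx_neq0 : f x != 0.
  by rewrite -sqrf_eq0 (connected_edge_invariant conn sqr_inv x x0) sqrf_eq0.
by rewrite (alt x y exy) oppr_gt0; case: (ltgtP (f x) 0) fx_neq0.
Qed.

Section TwistedEigenfunction.
Variables (s nu : R) (f : T -> R).
Hypothesis sign2 : s ^+ 2 = 1.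
Hypothesis f_eigen : forall x, lap_tw s f x = - (s * nu * f x).

Lemma signK a : s * (s * a) = a.
Proof. by rewrite mulrA -expr2 sign2 mul1r. Qed.

Lemma sqr_signB a b : (s * a - b) ^+ 2 = (a - s * b) ^+ 2.
Proof. by rewrite -[in LHS](signK b) -mulrBr exprMn sign2 mul1r. Qed.

Lemma lap_sqr x :
  lap e (fun z => f z ^+ 2) x = 2 * Gam_tw s f x - 2 * nu * f x ^+ 2.
Proof.
have sqrB y : f y ^+ 2 - f x ^+ 2 =
    (f y - s * f x) ^+ 2 + 2 * (s * f x) * (f y - s * f x).
  have -> : f x ^+ 2 = (s * f x) ^+ 2 by rewrite exprMn sign2 mul1r.
  ring.
rewrite /lap (eq_bigr _ (fun y _ => sqrB y)) big_split /= -big_distrr /=.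
rewrite mulrDr mulrCA -/(lap_tw s f x) f_eigen /Gam_tw.
have -> : 2 * (s * f x) * - (s * nu * f x) = - (2 * nu * f x ^+ 2 * s ^+ 2) by ring.
rewrite sign2 mulr1; lra.
Qed.

Lemma eigenvalue_tw_ge0 x0 : (forall y, f y ^+ 2 <= f x0 ^+ 2) -> f x0 != 0 -> 0 <= nu.
Proof.
move=> x0_max fx0_neq0; suff : 0 <= nu * f x0 ^+ 2.
  by rewrite pmulr_lge0 // exprn_even_gt0.
have -> : nu * f x0 ^+ 2 = - (s * f x0) * lap_tw s f x0.
  by rewrite f_eigen -[in LHS](mul1r (nu * _)) -sign2; ring.
rewrite /lap_tw mulrCA big_distrr mulr_ge0 ?invr_ge0 ?ler0n ?sumr_ge0 // => y _ /=.
have sfx0_sqr : (s * f x0) ^+ 2 = f x0 ^+ 2 by rewrite exprMn sign2 mul1r.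
have := x0_max y; have := sqr_ge0 (s * f x0 - f y); nra.
Qed.

Lemma eigenvalue_tw_eq0_edge : symmetric e -> connected_graph e -> nu = 0 ->
  forall x y, e x y -> f y = s * f x.
Proof.
move=> sym conn nu0 x y exy; apply: Gam_tw_eq0 exy.
have lap_sqr_nu0 z : lap e (fun z => f z ^+ 2) z = 2 * Gam_tw s f z.
  by rewrite lap_sqr nu0 mulr0 mul0r subr0.
have sqr_const : forall z z', f z ^+ 2 = f z' ^+ 2.
  by apply: lap_ge0_const sym conn _ => z; rewrite lap_sqr_nu0 mulr_ge0 ?Gam_tw_ge0.
have /eqP : lap e (fun z => f z ^+ 2) x = 0.
  by rewrite /lap big1 ?mulr0 // => z _; rewrite (sqr_const z x) subrr.
by rewrite lap_sqr_nu0 mulf_eq0 pnatr_eq0 /= => /eqP.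
Qed.

Hypotheses (irr : irreflexive e) (tf : triangle_free e) (cd : CD0inf e).

Section LocalTwist.
Variable x : T.

(* Thanks to triangle-freeness g = f on the second neighbours of x, so that
   Gam g g = Gam_tw s f on the closed neighbourhood of x. *)
Let g z := if e x z then s * f z else f z.

Let g_center : g x = f x.
Proof. by rewrite /g irr. Qed.

Let g_nbr y : e x y -> g y = s * f y.
Proof. by rewrite /g => ->. Qed.

Let g_nbr2 y z : e x y -> e y z -> g z = f z.
Proof. by move=> exy eyz; rewrite /g; case: ifP => // exz; case: (tf (And3 exy eyz exz)). Qed.

Lemma Gam_twist_center : Gam e g g x = Gam_tw s f x.
Proof.
rewrite Gam_sum /Gam_tw; congr (_ * (_ * _)); apply: eq_bigr => y exy.
by rewrite g_center g_nbr // -expr2 sqr_signB.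
Qed.

Lemma Gam_twist_nbr y : e x y -> Gam e g g y = Gam_tw s f y.
Proof.
move=> exy; rewrite Gam_sum /Gam_tw; congr (_ * (_ * _)).
by apply: eq_bigr => z eyz; rewrite (g_nbr2 exy eyz) g_nbr // -expr2.
Qed.

Lemma lap_twist_nbr y : e x y -> lap e g y = - (s * nu * f y).
Proof.
move=> exy; rewrite -f_eigen /lap /lap_tw; congr (_ * _).
by apply: eq_bigr => z eyz; rewrite (g_nbr2 exy eyz) g_nbr.
Qed.

Lemma lap_twist_center : lap e g x = - (nu * f x).
Proof.
have -> : lap e g x = s * lap_tw s f x.
  rewrite /lap /lap_tw mulrCA; congr (_ * _); rewrite big_distrr.
  by apply: eq_bigr => y exy /=; rewrite g_center g_nbr // mulrBr signK.
by rewrite f_eigen mulrN -mulrA signK.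
Qed.

Lemma Gam_twist_lap : Gam e g (lap e g) x = - (nu * Gam_tw s f x).
Proof.
rewrite Gam_sum /Gam_tw.
have -> : \sum_(y | e x y) (g y - g x) * (lap e g y - lap e g x) =
    - nu * \sum_(y | e x y) (f y - s * f x) ^+ 2.
  rewrite big_distrr; apply: eq_bigr => y exy /=.
  by rewrite g_center g_nbr // lap_twist_nbr // lap_twist_center -sqr_signB; ring.
ring.
Qed.

Lemma bochner_tw : 0 <= 2^-1 * lap e (Gam_tw s f) x + nu * Gam_tw s f x.
Proof.
have lap_Gam : lap e (Gam e g g) x = lap e (Gam_tw s f) x.
  exact: lap_eq_nbr Gam_twist_center Gam_twist_nbr.
by have := cd g x; rewrite /Gam2 lap_Gam Gam_twist_lap; lra.
Qed.

End LocalTwist.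

(* Maximum principle for Gam_tw s f + 2 nu f^2, whose Laplacian is at least
   2 nu Gam_tw s f - 4 nu^2 f^2 by the Bochner inequality. *)
Lemma Gam_tw_le (M : R) : 0 < nu -> (forall y, f y ^+ 2 <= M) ->
  forall x, Gam_tw s f x <= 4 * nu * M.
Proof.
move=> nu_gt0 f_le x; pose F z := Gam_tw s f z + 2 * nu * f z ^+ 2.
have [x0 F_max] := exists_argmax F x.
have := lap_argmax_le0 F_max; rewrite /F lap_linear lap_sqr.
have := bochner_tw x0; have := f_le x0; have := sqr_ge0 (f x0).
have : Gam_tw s f x <= F x0.
  by apply: le_trans (F_max x); rewrite /F lerDl mulr_ge0 ?sqr_ge0 // ltW ?mulr_gt0.
rewrite /F; nra.
Qed.

Lemma eigenvalue_tw_lb x0 u v (D : nat) : 0 < nu ->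
  (forall y, f y ^+ 2 <= f x0 ^+ 2) -> f x0 != 0 -> e u v ->
  2 * `|f x0| <= 3 * D%:R * `|f v - s * f u| ->
  18^-1 / ((max_deg e)%:R * D%:R ^+ 2) <= nu.
Proof.
move=> nu_gt0 x0_max fx0_neq0 euv sup_le.
have sqr_norm (a : R) : `|a| ^+ 2 = a ^+ 2 := real_normK (num_real a).
have d_gt0 : 0 < (max_deg e)%:R :> R.
  by rewrite ltr0n (leq_trans (deg_gt0 euv) (deg_le_max_deg u)).
have M_gt0 : 0 < f x0 ^+ 2 by rewrite exprn_even_gt0.
have q_le := le_trans (Gam_tw_ge_edge s f euv (deg_le_max_deg u)) (Gam_tw_le nu_gt0 x0_max u).
have M_le : 4 * f x0 ^+ 2 <= 9 * D%:R ^+ 2 * (f v - s * f u) ^+ 2.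
  have := normr_ge0 (f x0); rewrite -(sqr_norm (f x0)) -(sqr_norm (f v - s * f u)); nra.
move: q_le M_le M_gt0 d_gt0; set d := (max_deg e)%:R; set q := (f v - s * f u) ^+ 2.
set M := f x0 ^+ 2; set D2 := D%:R ^+ 2 => q_le M_le M_gt0 d_gt0.
have q_ge0 : 0 <= q by rewrite /q sqr_ge0.
have D2_ge0 : 0 <= D2 by rewrite /D2 sqr_ge0.
have D2_gt0 : 0 < D2 by nra.
have q_le' : q <= d * (8 * (nu * M)).
  by rewrite -ler_pdivrMl //; lra.
rewrite ler_pdivrMr; last exact: mulr_gt0.
nra.
Qed.

End TwistedEigenfunction.

End Graph.

Theorem theorem1p3 :
  exists c C : R, 0 < c /\ 0 < C /\
  forall (T : finType) (e : rel T),
    simple_graph e -> connected_graph e -> triangle_free e -> ~ bipartite e ->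
    CD0inf e ->
    forall (lambda : R) (f : T -> R), eigenpair e lambda f ->
      (lambda = 0 -> exists k : R, forall x, f x = k) /\
      (lambda != 0 ->
         c / ((max_deg e)%:R * (diameter e)%:R ^+ 2) <= lambda /\
         lambda <= 2 - C / ((max_deg e)%:R * (diameter e)%:R ^+ 2)).
Proof.
exists 18^-1, 18^-1; rewrite invr_gt0 ltr0n; do 2 split => //.
move=> T e [sym irr] conn tf nbip cd lam f [[x1 fx1_neq0] f_eigen].
have [u0 [v0 euv0]] := exists_edge_of_not_bipartite nbip.
have lapf x : lap e f x = - (lam * f x) by rewrite -f_eigen opprK.
have sqr1 : (1 : R) ^+ 2 = 1 := expr1n _ 2.
have sqrN1 : (-1 : R) ^+ 2 = 1 by rewrite sqrrN expr1n.
have eig1 x : lap_tw e 1 f x = - (1 * lam * f x) by rewrite lap_tw1 lapf mul1r.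
have eigN1 x : lap_tw e (-1) f x = - (-1 * (2 - lam) * f x).
  by rewrite lap_twN1 ?(connected_deg_gt0 conn euv0) // lapf; ring.
have [x0 x0_max fx0_neq0] := exists_argmax_sqr fx1_neq0.
split=> [lam0 | lam_neq0].
  exists (f x0) => x; apply: (connected_edge_invariant conn) => a b eab.
  by rewrite (eigenvalue_tw_eq0_edge sqr1 eig1 sym conn lam0 eab) mul1r.
have lam_gt0 : 0 < lam.
  by rewrite lt_def lam_neq0 (eigenvalue_tw_ge0 sqr1 eig1 x0_max fx0_neq0).
have mu_gt0 : 0 < 2 - lam.
  rewrite lt_def (eigenvalue_tw_ge0 sqrN1 eigN1 x0_max fx0_neq0) andbT.
  apply/eqP => mu0; apply: nbip; apply: (alternating_bipartite conn fx0_neq0) => x y exy.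
  by rewrite (eigenvalue_tw_eq0_edge sqrN1 eigN1 sym conn mu0 exy) mulN1r.
split.
  have [u [v [euv uv_max]]] := exists_max_edge (fun a b => `|f b - f a|) euv0.
  apply: (eigenvalue_tw_lb sqr1 eig1 irr tf cd lam_gt0 x0_max fx0_neq0 euv).
  have := eigenfun_norm_le conn lam_gt0 (normr_ge0 _) lapf uv_max x0.
  have : 0 <= (diameter e)%:R * `|f v - f u| :> R by rewrite mulr_ge0.
  by rewrite mul1r; lra.
have [u [v [euv uv_max]]] := exists_max_edge (fun a b => `|f b + f a|) euv0.
suff : 18^-1 / ((max_deg e)%:R * (diameter e)%:R ^+ 2) <= 2 - lam by lra.
apply: (eigenvalue_tw_lb sqrN1 eigN1 irr tf cd mu_gt0 x0_max fx0_neq0 euv).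
by rewrite mulN1r opprK; apply: signless_norm_le.
Qed.
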